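(* Let $T=(V,E)$ be an infinite spherically symmetric rooted tree with root $v_0$ and branching degrees $(d_r)_{r\ge0}$, $d_r\ge2$, $\sup_rd_r<\infty$, and let $S_n$, $\mathcal U_{n,r}$, $\mathcal V_n$ be as in the context. Then: (1) $\dim\ell^2(S_n)=|S_n|=\prod_{q=0}^{n-1}d_q$ for all $n\ge0$; (2) $\dim\mathcal U_{n,r}=\big(\prod_{q=0}^{n-2}d_q\big)(d_{n-1}-1)$ for all $n\ge2$, $r\ge n$; $\dim\mathcal U_{1,r}=d_0-1$ for all $r\ge1$; and $\dim\mathcal U_{0,r}=1$ for all $r\ge0$; (3) $\dim\mathcal V_n=\infty$ for all $n\ge0$.
   Context: A rooted tree with root $v_0$ is spherically symmetric with branching degrees $(d_r)$ if every vertex at distance $r$ from $v_0$ has exactly $d_r$ neighbours at distance $r+1$. $|v|$ is the distance to $v_0$, $S_r=\{v:|v|=r\}$, $\ell^2(S_r)\subset\ell^2(V)$ the functions vanishing off $S_r$; for $v\ne v_0$, $v_-$ is the neighbour of $v$ closer to $v_0$. $H$ is the operator on $\ell^2(V)$ with $(H\xi)(v)=\xi(v_-)$ for $v\ne v_0$ and $(H\xi)(v_0)=0$. Define $\mathcal U_{0,0}=\ell^2(S_0)$ and $\mathcal U_{0,r}=H^r(\mathcal U_{0,0})$; inductively for $n\ge1$, $\mathcal U_{n,n}$ is the orthogonal complement of $\mathcal U_{0,n}\oplus\cdots\oplus\mathcal U_{n-1,n}$ in $\ell^2(S_n)$, $\mathcal U_{n,r}=H^{r-n}(\mathcal U_{n,n})$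 for $r\ge n$; and $\mathcal V_n=\bigoplus_{r\ge n}\mathcal U_{n,r}$. *)

From HB Require Import structures.
From mathcomp Require Import all_boot all_order all_algebra.
From mathcomp Require Import reals complex.
Set Implicit Arguments. Unset Strict Implicit. Unset Printing Implicit Defensive.
Import Order.TTheory GRing.Theory Num.Theory.
Local Open Scope ring_scope.

(* A vertex at distance r from the root v0 is a word (i_0,...,i_{r-1})
   with i_q < d q; its parent v_- is obtained by deleting the last letter.
   Lev d r is the sphere S_r; the root v0 is the empty word (Lev d 0). *)
Definition Lev (d : nat -> nat) (r : nat) : finType :=
  {dffun forall i : 'I_r, 'I_(d i)}.

Definition parent (d : nat -> nat) (r : nat) (v : Lev d r.+1) : Lev d r :=
  [ffun i : 'I_r => v (widen_ord (leqnSn r) i) : 'I_(d i)].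

Definition Vert (d : nat -> nat) := {r : nat & Lev d r}.

Section Tree.
Variables (R : realType) (d : nat -> nat).
Notation C := (R[i]).

Definition Fn (r : nat) := {ffun Lev d r -> C^o}.

Definition dotS r (x y : Fn r) : C :=
  \sum_(v : Lev d r) (x v : C) * ((y v : C)^*).

Definition orthS r (U : {vspace Fn r}) : {vspace Fn r} :=
  (\bigcap_(u <- vbasis U) lker (linfun (fun x : Fn r => (dotS x u : C^o))))%VS.

Definition Hlev r : 'Hom(Fn r, Fn r.+1) :=
  linfun (fun xi : Fn r => [ffun v : Lev d r.+1 => xi (parent v)]).

Fixpoint Hit (m k : nat) : {vspace Fn m} -> {vspace Fn (k + m)} :=
  match k return {vspace Fn m} -> {vspace Fn (k + m)} with
  | 0 => fun U => U
  | k'.+1 => fun U => (Hlev (k' + m) @: Hit k' U)%VS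
  end.

(* H^(n-m)(U) for a subspace U of l^2(S_m), m <= n, as a subspace of
   l^2(S_n) (the zero subspace if n < m, which is never used). *)
Definition Hto (m n : nat) (U : {vspace Fn m}) : {vspace Fn n} :=
  (if (m <= n)%N as b return (m <= n)%N = b -> {vspace Fn n}
   then fun h => ecast k {vspace Fn k} (subnK h) (Hit (n - m) U)
   else fun _ => 0%VS) (erefl (m <= n)%N).

(* Utab n m = U_{m,m} for every m <= n:
   U_{0,0} = l^2(S_0), and U_{m,m} = orthogonal complement in l^2(S_m) of
   U_{0,m} + ... + U_{m-1,m} (a direct sum). *)
Fixpoint Utab (n : nat) : forall m : nat, {vspace Fn m} :=
  match n with
  | 0 => fun m => fullv
  | n'.+1 => fun m =>
      if (m <= n')%N then Utab n' m
      else orthS (\sum_(k < m) Hto m (Utab n' k))%VS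
  end.

Definition Unn (n : nat) : {vspace Fn n} := Utab n n.

(* U_{n,r} = H^{r-n}(U_{n,n}) for r >= n (zero subspace for r < n). *)
Definition Unr (n r : nat) : {vspace Fn r} := Hto r (Unn n).

Definition in_l2 (xi : Vert d -> C) : Prop :=
  exists M : C, forall N : nat,
    \sum_(r < N) \sum_(v : Lev d r) `|xi (existT _ (r : nat) v)| ^+ 2 <= M.

Definition restr (xi : Vert d -> C) (r : nat) : Fn r :=
  [ffun v : Lev d r => (xi (existT _ r v) : C^o)].

(* V_n = (Hilbert) orthogonal direct sum of the U_{n,r}, r >= n:
   the square-summable xi whose component on each sphere S_r lies in
   U_{n,r} for r >= n and vanishes for r < n. *)
Definition Vn (n : nat) (xi : Vert d -> C) : Prop :=
  in_l2 xi /\ forall r : nat, restr xi r \in (if (n <= r)%N then Unr n r else 0%VS).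

Definition lin_indep (N : nat) (f : 'I_N -> Vert d -> C) : Prop :=
  forall c : 'I_N -> C,
    (forall v, \sum_(i < N) c i * f i v = 0) -> forall i, c i = 0.

Definition infinite_dim (P : (Vert d -> C) -> Prop) : Prop :=
  forall N : nat, exists f : 'I_N -> Vert d -> C,
    (forall i, P (f i)) /\ lin_indep f.

End Tree.

(* H maps l^2(S_m) into l^2(S_n) by pulling functions back along the
   truncation S_n -> S_m; as every d_r > 0, truncation is onto and the
   pullback is injective, so dim U_{n,r} = dim U_{n,n}.  Inductively
   U_{0,n} + ... + U_{n,n} = l^2(S_n), so U_{0,n+1} + ... + U_{n,n+1} is the
   image of l^2(S_n), of dimension |S_n|, and its orthogonal complement
   U_{n+1,n+1} has dimension |S_{n+1}| - |S_n| = d_0...d_{n-1}(d_n - 1) > 0.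
   Nonzero vectors of the U_{n,r}, r >= n, live on distinct spheres, hence
   span an infinite-dimensional subspace of V_n. *)

From HB Require Import structures.
From mathcomp Require Import all_boot all_order all_algebra.
From mathcomp Require Import reals complex.
From mathcomp Require Import zify.
Set Implicit Arguments. Unset Strict Implicit. Unset Printing Implicit Defensive.
Import Order.TTheory GRing.Theory Num.Theory.
Local Open Scope ring_scope.

Lemma linfun_linearE (K : fieldType) (aT rT : vectType K) (f : aT -> rT) :
  linear f -> linfun f =1 f.
Proof.
move=> lin_f.
exact: (lfunE (HB.pack f (GRing.isLinear.Build _ _ _ _ f lin_f) : {linear aT -> rT})).
Qed.

Lemma dimv_bigcap_lker (K : fieldType) (vT : vectType K) (I : Type)
    (s : seq I) (F : I -> 'Hom(vT, K^o)) :
  (\dim {:vT} <= \dim (\bigcap_(i <- s) lker (F i)) + size s)%N.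
Proof.
elim: s => [|i s IH]; first by rewrite big_nil addn0.
rewrite big_cons /= capvC; set B := (\bigcap_(_ <- _) _)%VS in IH *.
have img_le1 : (\dim (F i @: B) <= 1)%N by rewrite (leq_trans (dimvS (subvf _))) ?dimvf.
have := limg_ker_dim (F i) B; lia.
Qed.

Section Tree.
Variables (R : realType) (d : nat -> nat).
Notation C := (R[i]).
Notation Fn := (Fn R d).
Notation Unn := (Unn R d).
Notation Unr := (Unr R d).

Lemma dim_Fn n : \dim (fullv : {vspace Fn n}) = #|Lev d n|.
Proof. by rewrite dimvf /dim /= muln1. Qed.

Lemma card_Lev n : #|Lev d n| = (\prod_(q < n) d q)%N.
Proof.
rewrite card_dep_ffun foldrE big_image /=.
by apply: eq_bigr => i _; rewrite card_ord.
Qed.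

Definition trunc m n (le_mn : (m <= n)%N) (v : Lev d n) : Lev d m :=
  [ffun i : 'I_m => v (widen_ord le_mn i) : 'I_(d i)].

Lemma Lev_congr n (v : Lev d n) (i j : 'I_n) : i = j -> (v i : nat) = v j.
Proof. by move->. Qed.

Lemma trunc_trans m n k (le_mn : (m <= n)%N) (le_nk : (n <= k)%N) (le_mk : (m <= k)%N) v :
  trunc le_mn (trunc le_nk v) = trunc le_mk v.
Proof.
by apply/ffunP => i; apply: val_inj; rewrite !ffunE; apply: Lev_congr; apply: val_inj.
Qed.

Lemma trunc_id m (le_mm : (m <= m)%N) v : trunc le_mm v = v.
Proof.
by apply/ffunP => i; apply: val_inj; rewrite ffunE; apply: Lev_congr; apply: val_inj.
Qed.

Definition pullback_fun m n (le_mn : (m <= n)%N) (y : Fn m) : Fn n :=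
  [ffun v => y (trunc le_mn v)].

Lemma pullback_fun_is_linear m n (le_mn : (m <= n)%N) : linear (pullback_fun le_mn).
Proof. by move=> a x y; apply/ffunP => v; rewrite !ffunE. Qed.

Definition pullback m n (le_mn : (m <= n)%N) : 'Hom(Fn m, Fn n) :=
  linfun (pullback_fun le_mn).

Lemma pullbackE m n (le_mn : (m <= n)%N) y v : pullback le_mn y v = y (trunc le_mn v).
Proof. by rewrite linfun_linearE ?ffunE //; apply: pullback_fun_is_linear. Qed.

Lemma pullback_comp m n k (le_mn : (m <= n)%N) (le_nk : (n <= k)%N) (le_mk : (m <= k)%N) :
  (pullback le_nk \o pullback le_mn)%VF = pullback le_mk.
Proof.
by apply/lfunP => y; apply/ffunP => v; rewrite comp_lfunE !pullbackE trunc_trans.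
Qed.

Lemma pullback_id m (le_mm : (m <= m)%N) : pullback le_mm = \1%VF.
Proof. by apply/lfunP => y; apply/ffunP => v; rewrite id_lfunE pullbackE trunc_id. Qed.

Lemma Hlev_pullback r : Hlev R d r = pullback (leqnSn r).
Proof. by []. Qed.

Lemma Hit_pullback m k (U : {vspace Fn m}) : Hit k U = (pullback (leq_addl k m) @: U)%VS.
Proof.
elim: k => [|k IH] /=; first by rewrite pullback_id lim1g.
by rewrite IH Hlev_pullback -limg_comp (pullback_comp _ _ (leq_addl k.+1 m)).
Qed.

Lemma Hto_pullback m n (U : {vspace Fn m}) (le_mn : (m <= n)%N) :
  Hto n U = (pullback le_mn @: U)%VS.
Proof.
rewrite /Hto; move: (erefl (m <= n)%N); rewrite {2 3}le_mn => le_mn'.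
have cast k (e : k = n) (le_mk : (m <= k)%N) :
    ecast k {vspace Fn k} e (pullback le_mk @: U)%VS = (pullback le_mn @: U)%VS.
  by case: n / e le_mn le_mn' => le_mn _; rewrite (bool_irrelevance le_mk le_mn).
by rewrite Hit_pullback cast.
Qed.

Lemma dotS_is_linear r (u : Fn r) : linear (fun x : Fn r => (dotS x u : C^o)).
Proof.
move=> a x y; rewrite /dotS scaler_sumr -big_split; apply: eq_bigr => v _.
by rewrite !ffunE mulrDl scalerAl.
Qed.

Lemma dotS_functionalE r (u x : Fn r) :
  linfun (fun x : Fn r => (dotS x u : C^o)) x = dotS x u.
Proof. exact/linfun_linearE/dotS_is_linear. Qed.

Lemma conj_dotS r (x y : Fn r) : (dotS x y)^* = dotS y x.
Proof.
rewrite rmorph_sum; apply: eq_bigr => v _.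
by rewrite rmorphM /= conjCK mulrC.
Qed.

Lemma dotS_self_eq0 r (x : Fn r) : (dotS x x == 0) = (x == 0).
Proof.
rewrite /dotS psumr_eq0 => [|v _]; last by rewrite -normCK exprn_ge0.
apply/idP/eqP => [/allP x0|->]; last by apply/allP => v _; rewrite ffunE mul0r eqxx.
apply/ffunP => v; rewrite ffunE; apply/eqP.
by rewrite -normr_eq0 -sqrf_eq0 normCK (implyP (x0 v _)) ?mem_index_enum.
Qed.

Lemma capv_orthS r (W : {vspace Fn r}) : (W :&: orthS W = 0)%VS.
Proof.
apply/eqP; rewrite -subv0; apply/subvP => x /memv_capP[xW xWperp].
have W_perp_x : (W <= lker (linfun (fun y : Fn r => (dotS y x : C^o))))%VS.
  rewrite -(span_basis (vbasisP W)); apply/span_subvP => u uW.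
  move: xWperp; rewrite /orthS (big_rem u uW) /= memv_cap => /andP[+ _].
  rewrite !memv_ker !dotS_functionalE => /eqP x_perp_u.
  by rewrite -conj_dotS x_perp_u conjC0.
have := subvP W_perp_x x xW.
by rewrite memv_ker dotS_functionalE dotS_self_eq0 memv0.
Qed.

Lemma dim_orthS r (W : {vspace Fn r}) : (\dim (orthS W) + \dim W = #|Lev d r|)%N.
Proof.
have orth_ge : (#|Lev d r| <= \dim (orthS W) + \dim W)%N.
  by rewrite -dim_Fn -[X in (_ + X)%N](size_tuple (vbasis W)); apply: dimv_bigcap_lker.
have := dimv_sum_cap W (orthS W); rewrite capv_orthS dimv0 addn0.
have := dimvS (subvf (W + orthS W)); rewrite dim_Fn; lia.
Qed.

Lemma addv_orthS r (W : {vspace Fn r}) : (W + orthS W = fullv)%VS.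
Proof.
apply/eqP; rewrite eqEdim subvf /= dim_Fn -(dim_orthS W).
by rewrite addnC -(dimv_sum_cap W (orthS W)) capv_orthS dimv0 addn0.
Qed.

Lemma Utab_Unn n m : (m <= n)%N -> Utab R d n m = Unn m.
Proof.
elim: n => [|n IH]; first by rewrite leqn0 => /eqP ->.
rewrite leq_eqVlt ltnS /= => /orP[/eqP-> | le_mn]; last by rewrite le_mn IH.
by rewrite /Unn /= ltnn.
Qed.

Lemma UnnS n : Unn n.+1 = orthS (\sum_(k < n.+1) Unr k n.+1)%VS.
Proof.
rewrite /Unn /= ltnn; congr orthS; apply: eq_bigr => k _.
by rewrite Utab_Unn // -ltnS.
Qed.

Lemma sum_Unr_full n : (\sum_(k < n.+1) Unr k n = fullv)%VS.
Proof.
rewrite big_ord_recr /= /Unr (Hto_pullback _ (leqnn n)) pullback_id lim1g.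
by case: n => [|n]; rewrite ?big_ord0 ?add0v // UnnS addv_orthS.
Qed.

Lemma sum_UnrS n : (\sum_(k < n.+1) Unr k n.+1)%VS = (pullback (leqnSn n) @: fullv)%VS.
Proof.
rewrite -(sum_Unr_full n) limg_sum; apply: eq_bigr => k _.
have le_kn : (k <= n)%N by rewrite -ltnS.
rewrite /Unr (Hto_pullback _ le_kn) (Hto_pullback _ (leq_trans le_kn (leqnSn n))).
by rewrite -limg_comp (pullback_comp _ _ (leq_trans le_kn (leqnSn n))).
Qed.

Lemma dim_Unn0 : \dim (Unn 0) = 1%N.
Proof. by rewrite /Unn /= dim_Fn card_Lev big_ord0. Qed.

Section PositiveDegrees.
Hypothesis d_gt0 : forall r, (0 < d r)%N.

Definition ext_letter m n (w : Lev d m) (j : 'I_n) : 'I_(d j) :=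
  insubd (Ordinal (d_gt0 j))
    (if insub (j : nat) : option 'I_m is Some k then val (w k) else 0%N).

Definition extend m n (w : Lev d m) : Lev d n := [ffun j => ext_letter w j].

Lemma trunc_extend m n (le_mn : (m <= n)%N) (w : Lev d m) : trunc le_mn (extend n w) = w.
Proof.
apply/ffunP => i; apply: val_inj; rewrite !ffunE /ext_letter /= valK insubdK //.
exact: ltn_ord.
Qed.

Lemma lker_pullback m n (le_mn : (m <= n)%N) : lker (pullback le_mn) == 0%VS.
Proof.
apply/lker0P => y1 y2 eq_y; apply/ffunP => w.
have := congr1 (fun f : Fn n => f (extend n w)) eq_y.
by rewrite /= !pullbackE trunc_extend.
Qed.

Lemma dim_pullback m n (le_mn : (m <= n)%N) (U : {vspace Fn m}) :
  \dim (pullback le_mn @: U) = \dim U.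
Proof. by apply: limg_dim_eq; rewrite (eqP (lker_pullback le_mn)) capv0. Qed.

Lemma dim_UnnS n : \dim (Unn n.+1) = (\prod_(q < n) d q * (d n - 1))%N.
Proof.
have := dim_orthS (\sum_(k < n.+1) Unr k n.+1)%VS.
rewrite -UnnS sum_UnrS dim_pullback // dim_Fn !card_Lev big_ord_recr /= mulnBr muln1.
lia.
Qed.

Lemma dim_Unr n r : (n <= r)%N -> \dim (Unr n r) = \dim (Unn n).
Proof. by move=> le_nr; rewrite /Unr (Hto_pullback _ le_nr) dim_pullback. Qed.

End PositiveDegrees.

(* Taking a whole family [w] avoids casting [w r] along [tag x = r]. *)
Definition sphere_fun (w : forall r, Fn r) (r : nat) (x : Vert d) : C :=
  if tag x == r then w (tag x) (tagged x) else 0.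

Lemma restr_sphere_fun w r s : restr (sphere_fun w r) s = if s == r then w s else 0.
Proof.
by apply/ffunP => v; rewrite /sphere_fun !ffunE /=; case: (s == r); rewrite ?ffunE.
Qed.

Lemma in_l2_sphere_fun w r : in_l2 (sphere_fun w r).
Proof.
have sphere_sum (s : nat) :
    \sum_(v : Lev d s) `|sphere_fun w r (existT _ s v)| ^+ 2 =
    if s == r then \sum_(v : Lev d r) `|w r v| ^+ 2 else 0.
  rewrite /sphere_fun /=; case: eqP => [->|_] //.
  by rewrite big1 // => v _; rewrite normr0 expr0n.
exists (\sum_(v : Lev d r) `|w r v| ^+ 2) => N.
under eq_bigr do rewrite sphere_sum.
rewrite -big_mkcond /=; case: (ltnP r N) => [lt_rN | le_Nr].
  by rewrite (big_pred1 (Ordinal lt_rN)) // => s; rewrite /= -val_eqE.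
rewrite big_pred0 ?sumr_ge0 // => [v _|s]; first exact: exprn_ge0.
by rewrite ltn_eqF // (leq_trans (ltn_ord s) le_Nr).
Qed.

Lemma lin_indep_sphere_fun N (w : forall r, Fn r) (lvl : 'I_N -> nat) :
  injective lvl -> (forall i, w (lvl i) != 0) ->
  lin_indep (fun i => sphere_fun w (lvl i)).
Proof.
move=> lvl_inj w_neq0 c sum_eq0 i.
have coord v : c i * w (lvl i) v = 0.
  rewrite -(sum_eq0 (existT _ (lvl i) v)) (bigD1 i) //= big1 ?addr0 => [|j ne_ji].
    by rewrite /sphere_fun /= eqxx.
  by rewrite /sphere_fun /= (inj_eq lvl_inj) eq_sym (negbTE ne_ji) mulr0.
apply/eqP; apply: contraNT (w_neq0 i) => ci_neq0.
by apply/eqP/ffunP => v; rewrite ffunE; apply: (mulfI ci_neq0); rewrite coord mulr0.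
Qed.

Section BranchingAtLeastTwo.
Hypothesis d_ge2 : forall r, (1 < d r)%N.

Lemma Unr_neq0 n r : (n <= r)%N -> Unr n r != 0%VS.
Proof.
have d_gt0 q : (0 < d q)%N := ltnW (d_ge2 q).
move=> le_nr; rewrite -dimv_eq0 dim_Unr //; case: n {le_nr} => [|n].
  by rewrite dim_Unn0.
by rewrite dim_UnnS // -lt0n muln_gt0 subn_gt0 d_ge2 andbT; apply: prodn_gt0.
Qed.

Lemma infinite_dim_Vn n : infinite_dim (@Vn R d n).
Proof.
move=> N; pose w r := vpick (Unr n r).
exists (fun i : 'I_N => sphere_fun w (n + i)); split.
  move=> i; split; first exact: in_l2_sphere_fun.
  move=> r; rewrite restr_sphere_fun.
  case: eqP => [->|_]; first by rewrite leq_addr memv_pick.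
  by case: ifP; rewrite mem0v.
apply: lin_indep_sphere_fun => [i j /addnI/val_inj // | i].
by rewrite vpick0 Unr_neq0 // leq_addr.
Qed.

End BranchingAtLeastTwo.

End Tree.

Theorem proposition4p3 (R : realType) (d : nat -> nat)
  (hd2 : forall r : nat, (2 <= d r)%N)
  (hdb : exists B : nat, forall r : nat, (d r <= B)%N) :
  (* (1) *)
  (forall n : nat,
     \dim (fullv : {vspace Fn R d n}) = #|Lev d n| /\
     #|Lev d n| = (\prod_(q < n) d q)%N) /\
  (* (2) *)
  (forall n r : nat, (2 <= n)%N -> (n <= r)%N ->
     \dim (Unr R d n r) = ((\prod_(q < n.-1) d q) * (d n.-1 - 1))%N) /\
  (forall r : nat, (1 <= r)%N -> \dim (Unr R d 1 r) = (d 0 - 1)%N) /\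
  (forall r : nat, \dim (Unr R d 0 r) = 1%N) /\
  (* (3) *)
  (forall n : nat, @infinite_dim R d (@Vn R d n)).
Proof.
have d_gt0 r : (0 < d r)%N := ltnW (hd2 r).
split; first by move=> n; rewrite dim_Fn card_Lev.
split; first by move=> [|[|n]] r // _ le_nr; rewrite dim_Unr // dim_UnnS.
split; first by move=> r le_1r; rewrite dim_Unr // dim_UnnS // big_ord0 mul1n.
split; first by move=> r; rewrite dim_Unr // dim_Unn0.
exact: infinite_dim_Vn.
Qed.
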